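(* Let $\mathbb{X}$ be a Cartesian differential category with differential combinator $\mathsf{D}$, and let $\omega^{\mathsf{D}}:\mathbb{X}\to\mathcal{D}[\mathbb{X}]$ be identity on objects and send $f$ to the sequence $\omega^{\mathsf{D}}(f)_0=f$, $\omega^{\mathsf{D}}(f)_n=\mathsf{D}^n[f]$ for $n\ge1$. Then $(\mathbb{X},\omega^{\mathsf{D}})$ is a $\mathcal{D}$-coalgebra (in particular each $\omega^{\mathsf{D}}(f)_\bullet$ is a $\mathsf{D}$-sequence and $\omega^{\mathsf{D}}$ is a strict Cartesian left additive functor).
   Context: Composition in diagrammatic order. A Cartesian left additive category: category with finite products, hom-sets commutative monoids with $f(g+h)=fg+fh$, $f0=0$, projections additive. A Cartesian differential category is a Cartesian left additive category with a combinator $f:A\to B\mapsto\mathsf{D}[f]:A\times A\to B$ satisfying: [CD.1] $\mathsf{D}[f+g]=\mathsf{D}[f]+\mathsf{D}[g]$, $\mathsf{D}[0]=0$; [CD.2] $(1\times(\pi_0+\pi_1))\mathsf{D}[f]=(1\times\pi_0)\mathsf{D}[f]+(1\times\pi_1)\mathsf{D}[f]$, $\langle1,0\rangle\mathsf{D}[f]=0$; [CD.3] $\mathsf{D}[1]=\pi_1$, $\mathsf{D}[\pi_j]=\pi_1\pi_j$; [CD.4] $\mathsf{D}[\langle f,g\rangle]=\langle\mathsf{D}[f],\mathsf{D}[g]\rangle$; [CD.5] $\mathsf{D}[fg]=\langle\pi_0f,\mathsf{D}[f]\rangle\mathsf{D}[g]$; [CD.6] $\ell\mathsf{D}^2[f]=\mathsf{D}[f]$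 with $\ell=\langle1,0\rangle\times\langle0,1\rangle:A\times A\to(A\times A)\times(A\times A)$; [CD.7] $c\mathsf{D}^2[f]=\mathsf{D}^2[f]$ with $c=\langle\langle\pi_0\pi_0,\pi_1\pi_0\rangle,\langle\pi_0\pi_1,\pi_1\pi_1\rangle\rangle$. Let $\mathsf{P}(A)=A\times A$, $\mathsf{P}(f)=f\times f$. Pre-$\mathsf{D}$-sequence $f_\bullet:A\to B$: $(f_n)_{n\ge0}$, $f_n:\mathsf{P}^n(A)\to B$; $(h\cdot f_\bullet)_n=\mathsf{P}^n(h)f_n$; $\mathsf{T}(f_\bullet)_n=\langle\mathsf{P}^n(\pi_0)f_n,f_{n+1}\rangle$; $\mathsf{D}[f_\bullet]_n=f_{n+1}$; identity $i_0=1$, $i_n=\pi_1\cdots\pi_1$; composition $(f_\bullet\ast g_\bullet)_n=\mathsf{T}^n(f_\bullet)_0g_n$; products: projections $i_\bullet\cdot\pi_j$, pairing pointwise; addition pointwise. A $\mathsf{D}$-sequence is a pre-$\mathsf{D}$-sequence with, for all $n$ and $C=\mathsf{P}^n(A)$: $\langle1,0\rangle\cdot\mathsf{D}^{n+1}[f_\bullet]=0_\bullet$; $(1\times(\pi_0+\pi_1))\cdot\mathsf{D}^{n+1}[f_\bullet]=(1\times\pi_0)\cdot\mathsf{D}^{n+1}[f_\bullet]+(1\times\pi_1)\cdot\mathsf{D}^{n+1}[f_\bullet]$; $\ell\cdot\mathsf{D}^{n+2}[f_\bullet]=\mathsf{D}^{n+1}[f_\bullet]$; $c\cdot\mathsf{D}^{n+2}[f_\bullet]=\mathsf{D}^{n+2}[f_\bullet]$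 (the maps taken for $C$). $\mathcal{D}[\mathbb{X}]$: category of $\mathsf{D}$-sequences. Comonad: $\mathcal{D}[\mathsf{F}](f_\bullet)_n=\mathsf{F}(f_n)$; $\varepsilon(f_\bullet)=f_0$; $\delta(f_\bullet)_0=f_\bullet$, $\delta(f_\bullet)_n=\mathsf{D}^n[f_\bullet]$. A $\mathcal{D}$-coalgebra is a pair $(\mathbb{X},\omega)$ with $\omega:\mathbb{X}\to\mathcal{D}[\mathbb{X}]$ a functor preserving finite products strictly (including $\omega(\pi_j)=i_\bullet\cdot\pi_j$) and $+$, $0$, with $\omega\varepsilon=1_{\mathbb{X}}$ and $\omega\delta=\omega\,\mathcal{D}[\omega]$. *)

(* Composition is written in DIAGRAMMATIC order: comp f g = "f then g" = fg. *)
Set Implicit Arguments.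
Unset Strict Implicit.

Record CLACat : Type := {
  obj : Type;
  hom : obj -> obj -> Type;
  idm : forall A, hom A A;
  comp : forall {A B C}, hom A B -> hom B C -> hom A C;
  comp_assoc : forall A B C E (f : hom A B) (g : hom B C) (h : hom C E),
      comp (comp f g) h = comp f (comp g h);
  comp_id_l : forall A B (f : hom A B), comp (idm A) f = f;
  comp_id_r : forall A B (f : hom A B), comp f (idm B) = f;
  prod : obj -> obj -> obj;
  pi0 : forall {A B}, hom (prod A B) A;
  pi1 : forall {A B}, hom (prod A B) B;
  pair : forall {C A B}, hom C A -> hom C B -> hom C (prod A B);
  pair_pi0 : forall C A B (f : hom C A) (g : hom C B), comp (pair f g) pi0 = f;
  pair_pi1 : forall C A B (f : hom C A) (g : hom C B), comp (pair f g) pi1 = g;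
  pair_uniq : forall C A B (h : hom C (prod A B)), h = pair (comp h pi0) (comp h pi1);
  term : obj;
  bang : forall A, hom A term;
  bang_uniq : forall A (h : hom A term), h = bang A;
  add : forall {A B}, hom A B -> hom A B -> hom A B;
  zero : forall {A B}, hom A B;
  add_assoc : forall A B (f g h : hom A B), add (add f g) h = add f (add g h);
  add_comm : forall A B (f g : hom A B), add f g = add g f;
  add_0l : forall A B (f : hom A B), add zero f = f;
  comp_addr : forall A B C (f : hom A B) (g h : hom B C),
      comp f (add g h) = add (comp f g) (comp f h);
  comp_0r : forall A B C (f : hom A B), comp f (@zero B C) = zero;
  add_pi0 : forall C A B (f g : hom C (prod A B)),
      comp (add f g) pi0 = add (comp f pi0) (comp g pi0);
  zero_pi0 : forall C A B, comp (@zero C (prod A B)) pi0 = zero;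
  add_pi1 : forall C A B (f g : hom C (prod A B)),
      comp (add f g) pi1 = add (comp f pi1) (comp g pi1);
  zero_pi1 : forall C A B, comp (@zero C (prod A B)) pi1 = zero
}.

Arguments idm {c} A.
Arguments comp {c A B C} f g.
Arguments prod {c} A B.
Arguments pi0 {c A B}.
Arguments pi1 {c A B}.
Arguments pair {c C A B} f g.
Arguments term {c}.
Arguments bang {c} A.
Arguments add {c A B} f g.
Arguments zero {c A B}.

Section CLADefs.
Variable X : CLACat.
Local Notation Hom := (@hom X).
Local Notation Obj := (@obj X).

Definition prodm {A A' B B' : Obj} (f : Hom A B) (g : Hom A' B')
  : Hom (prod A A') (prod B B') := pair (comp pi0 f) (comp pi1 g).

Definition ell (A : Obj) : Hom (prod A A) (prod (prod A A) (prod A A)) :=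
  prodm (pair (idm A) zero) (pair zero (idm A)).

Definition cmap (A : Obj)
  : Hom (prod (prod A A) (prod A A)) (prod (prod A A) (prod A A)) :=
  pair (pair (comp pi0 pi0) (comp pi1 pi0)) (pair (comp pi0 pi1) (comp pi1 pi1)).

Fixpoint Pn (n : nat) (A : Obj) : Obj :=
  match n with 0 => A | S n' => Pn n' (prod A A) end.

Fixpoint Pm (n : nat) {A B : Obj} (h : Hom A B) : Hom (Pn n A) (Pn n B) :=
  match n return Hom (Pn n A) (Pn n B) with
  | 0 => h
  | S n' => Pm n' (prodm h h)
  end.

Definition dseq (A B : Obj) : Type := forall n : nat, Hom (Pn n A) B.

Definition precomp {C A B : Obj} (h : Hom C A) (f : dseq A B) : dseq C B :=
  fun n => comp (Pm n h) (f n).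

Definition Tseq {A B : Obj} (f : dseq A B) : dseq (prod A A) (prod B B) :=
  fun n => pair (comp (Pm n pi0) (f n)) (f (S n)).

Fixpoint Tn (n : nat) {A B : Obj} (f : dseq A B) : dseq (Pn n A) (Pn n B) :=
  match n return dseq (Pn n A) (Pn n B) with
  | 0 => f
  | S n' => Tn n' (Tseq f)
  end.

Definition Dseq {A B : Obj} (f : dseq A B) : dseq (prod A A) B :=
  fun n => f (S n).

Fixpoint Dn (n : nat) {A B : Obj} (f : dseq A B) : dseq (Pn n A) B :=
  match n return dseq (Pn n A) B with
  | 0 => f
  | S n' => Dn n' (Dseq f)
  end.

Fixpoint ident (n : nat) (A : Obj) : Hom (Pn n A) A :=
  match n return Hom (Pn n A) A with
  | 0 => idm A
  | S n' => comp (ident n' (prod A A)) pi1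
  end.

Definition iseq (A : Obj) : dseq A A := fun n => ident n A.

Definition seqcomp {A B C : Obj} (f : dseq A B) (g : dseq B C) : dseq A C :=
  fun n => comp (Tn n f 0) (g n).

Definition seqpi0 (A B : Obj) : dseq (prod A B) A :=
  fun n => comp (ident n (prod A B)) pi0.
Definition seqpi1 (A B : Obj) : dseq (prod A B) B :=
  fun n => comp (ident n (prod A B)) pi1.
Definition seqpair {C A B : Obj} (f : dseq C A) (g : dseq C B) : dseq C (prod A B) :=
  fun n => pair (f n) (g n).
Definition seqbang (A : Obj) : dseq A term := fun n => bang (Pn n A).

Definition seqadd {A B : Obj} (f g : dseq A B) : dseq A B := fun n => add (f n) (g n).
Definition seqzero (A B : Obj) : dseq A B := fun n => zero.

(* D-sequences; here C = P^n(A) and D^{n+1}[f] = D[D^n[f]] : P(C) -> B *)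
Definition is_Dseq {A B : Obj} (f : dseq A B) : Prop :=
  forall n : nat,
    precomp (pair (idm (Pn n A)) zero) (Dseq (Dn n f)) = seqzero _ _
    /\ precomp (prodm (idm (Pn n A)) (add pi0 pi1)) (Dseq (Dn n f))
       = seqadd (precomp (prodm (idm (Pn n A)) pi0) (Dseq (Dn n f)))
                (precomp (prodm (idm (Pn n A)) pi1) (Dseq (Dn n f)))
    /\ precomp (ell (Pn n A)) (Dseq (Dseq (Dn n f))) = Dseq (Dn n f)
    /\ precomp (cmap (Pn n A)) (Dseq (Dseq (Dn n f))) = Dseq (Dseq (Dn n f)).

Definition epsilon {A B : Obj} (f : dseq A B) : Hom A B := f 0.
Definition delta {A B : Obj} (f : dseq A B) : forall n, dseq (Pn n A) B :=
  fun n => Dn n f.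
Definition Dmap (F : forall A B : Obj, Hom A B -> dseq A B) {A B : Obj}
  (f : dseq A B) : forall n, dseq (Pn n A) B :=
  fun n => F _ _ (f n).

Definition is_D_coalgebra (omega : forall A B : Obj, Hom A B -> dseq A B) : Prop :=
  (forall A B (f : Hom A B), is_Dseq (omega A B f))
  /\ (forall A, omega A A (idm A) = iseq A)
  /\ (forall A B C (f : Hom A B) (g : Hom B C),
        omega A C (comp f g) = seqcomp (omega A B f) (omega B C g))
  /\ (forall A B, omega (prod A B) A pi0 = seqpi0 A B)
  /\ (forall A B, omega (prod A B) B pi1 = seqpi1 A B)
  /\ (forall C A B (f : Hom C A) (g : Hom C B),
        omega C (prod A B) (pair f g) = seqpair (omega C A f) (omega C B g))
  /\ (forall A, omega A term (bang A) = seqbang A)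
  /\ (forall A B (f g : Hom A B), omega A B (add f g) = seqadd (omega A B f) (omega A B g))
  /\ (forall A B, omega A B zero = seqzero A B)
  /\ (forall A B (f : Hom A B), epsilon (omega A B f) = f)
  /\ (forall A B (f : Hom A B), delta (omega A B f) = Dmap omega (omega A B f)).

End CLADefs.

Record CDC : Type := {
  cat :> CLACat;
  Dif : forall {A B : obj cat}, @hom cat A B -> @hom cat (prod A A) B;
  CD1_add : forall A B (f g : @hom cat A B), Dif (add f g) = add (Dif f) (Dif g);
  CD1_zero : forall A B, Dif (@zero cat A B) = zero;
  CD2_add : forall A B (f : @hom cat A B),
      comp (prodm (idm A) (add pi0 pi1)) (Dif f)
      = add (comp (prodm (idm A) pi0) (Dif f)) (comp (prodm (idm A) pi1) (Dif f));
  CD2_zero : forall A B (f : @hom cat A B), comp (pair (idm A) zero) (Dif f) = zero;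
  CD3_id : forall A, Dif (idm A) = pi1;
  CD3_pi0 : forall A B, Dif (@pi0 cat A B) = comp pi1 pi0;
  CD3_pi1 : forall A B, Dif (@pi1 cat A B) = comp pi1 pi1;
  CD4 : forall C A B (f : @hom cat C A) (g : @hom cat C B),
      Dif (pair f g) = pair (Dif f) (Dif g);
  CD5 : forall A B C (f : @hom cat A B) (g : @hom cat B C),
      Dif (comp f g) = comp (pair (comp pi0 f) (Dif f)) (Dif g);
  CD6 : forall A B (f : @hom cat A B), comp (ell A) (Dif (Dif f)) = Dif f;
  CD7 : forall A B (f : @hom cat A B), comp (cmap A) (Dif (Dif f)) = Dif (Dif f)
}.

Arguments Dif {c A B} f.

Fixpoint Dit (X : CDC) (n : nat) {A B : obj X} (f : @hom X A B) : @hom X (Pn n A) B :=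
  match n return @hom X (Pn n A) B with
  | 0 => f
  | S n' => Dit n' (Dif f)
  end.

Definition omegaD (X : CDC) (A B : obj X) (f : @hom X A B) : dseq A B :=
  fun n => Dit n f.
Arguments omegaD X A B f : clear implicits.

From Stdlib Require Import FunctionalExtensionality.

(* Everything reduces to identities for the iterated derivative D^n.  It is
   additive and preserves pairing (CD.1, CD.4), and iterating the chain rule
   (CD.5) gives D^n[fg] = T^n(f) D^n[g] with T(f) = <pi0 f, D[f]>, which is
   functoriality of omega.  For a linear map k, i.e. D[k] = pi1 k (identities,
   projections, l, c and their pairings, sums, composites), the chain rule
   gives D^n[k] = i_n k and D^n[k g] = P^n(k) D^n[g]; so precomposing
   omega(g) with k is omega(k g), and the D-sequence axioms of omega(f) are
   omega applied to CD.2, CD.6 and CD.7 for D^n[f]. *)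

Lemma comp_pair (X : CLACat) (D C A B : obj X)
    (h : hom D C) (f : hom C A) (g : hom C B) :
  comp h (pair f g) = pair (comp h f) (comp h g).
Proof.
  rewrite (pair_uniq (comp h (pair f g))), !comp_assoc, pair_pi0, pair_pi1.
  reflexivity.
Qed.

Section LinearMaps.
Variable X : CDC.

Definition linear {A B : obj X} (k : hom A B) : Prop := Dif k = comp pi1 k.

Lemma linear_idm A : linear (idm A).
Proof. unfold linear. rewrite CD3_id, comp_id_r. reflexivity. Qed.

Lemma linear_pi0 A B : linear (@pi0 X A B).
Proof. apply CD3_pi0. Qed.

Lemma linear_pi1 A B : linear (@pi1 X A B).
Proof. apply CD3_pi1. Qed.

Lemma linear_zero A B : linear (@zero X A B).
Proof. unfold linear. rewrite CD1_zero, comp_0r. reflexivity. Qed.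

Lemma linear_add A B (a b : hom A B) : linear a -> linear b -> linear (add a b).
Proof. unfold linear; intros Ha Hb. rewrite CD1_add, Ha, Hb, comp_addr. reflexivity. Qed.

Lemma linear_comp A B C (a : hom A B) (b : hom B C) :
  linear a -> linear b -> linear (comp a b).
Proof.
  unfold linear; intros Ha Hb.
  rewrite CD5, Ha, Hb, <- comp_assoc, pair_pi1, comp_assoc. reflexivity.
Qed.

Lemma linear_pair C A B (a : hom C A) (b : hom C B) :
  linear a -> linear b -> linear (pair a b).
Proof. unfold linear; intros Ha Hb. rewrite CD4, Ha, Hb, comp_pair. reflexivity. Qed.

Lemma linear_prodm A A' B B' (f : hom A B) (g : hom A' B') :
  linear f -> linear g -> linear (prodm f g).
Proof.
  intros Hf Hg. unfold prodm.
  apply linear_pair; apply linear_comp; auto using linear_pi0, linear_pi1.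
Qed.

Lemma linear_ell A : linear (ell A).
Proof.
  unfold ell. apply linear_prodm; apply linear_pair; auto using linear_idm, linear_zero.
Qed.

Lemma linear_cmap A : linear (cmap A).
Proof.
  unfold cmap.
  apply linear_pair; apply linear_pair; apply linear_comp; auto using linear_pi0, linear_pi1.
Qed.

End LinearMaps.

Arguments linear {X A B} k.

Section IteratedDerivative.
Variable X : CDC.

Lemma Dit_add n : forall A B (f g : @hom X A B),
  Dit n (add f g) = add (Dit n f) (Dit n g).
Proof. induction n; intros; simpl; [reflexivity|]. rewrite CD1_add. apply IHn. Qed.

Lemma Dit_zero n : forall A B, Dit n (@zero X A B) = zero.
Proof. induction n; intros; simpl; [reflexivity|]. rewrite CD1_zero. apply IHn. Qed.

Lemma Dit_pair n : forall C A B (f : @hom X C A) (g : @hom X C B),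
  Dit n (pair f g) = pair (Dit n f) (Dit n g).
Proof. induction n; intros; simpl; [reflexivity|]. rewrite CD4. apply IHn. Qed.

Lemma Dit_linear_comp n : forall A' A B (k : @hom X A' A) (g : hom A B),
  linear k -> Dit n (comp k g) = comp (Pm n k) (Dit n g).
Proof.
  induction n; intros A' A B k g Hk; simpl; [reflexivity|].
  rewrite CD5, Hk. apply IHn, linear_prodm; exact Hk.
Qed.

Lemma Dit_linear n : forall A B (k : @hom X A B),
  linear k -> Dit n k = comp (ident n A) k.
Proof.
  induction n; intros A B k Hk; simpl.
  - rewrite comp_id_l. reflexivity.
  - rewrite Hk, IHn, comp_assoc by (apply linear_comp; auto using linear_pi1).
    reflexivity.
Qed.

Definition tangent {A B : obj X} (f : hom A B) : hom (prod A A) (prod B B) :=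
  pair (comp pi0 f) (Dif f).

Fixpoint tangent_iter (n : nat) {A B : obj X} (f : hom A B) : hom (Pn n A) (Pn n B) :=
  match n return hom (Pn n A) (Pn n B) with
  | 0 => f
  | S n' => tangent_iter n' (tangent f)
  end.

Lemma Dit_comp n : forall A B C (f : @hom X A B) (g : hom B C),
  Dit n (comp f g) = comp (tangent_iter n f) (Dit n g).
Proof. induction n; intros; simpl; [reflexivity|]. rewrite CD5. apply IHn. Qed.

End IteratedDerivative.

Arguments tangent {X A B} f.
Arguments tangent_iter {X} n {A B} f.

Section OmegaD.
Variable X : CDC.
Local Notation omega := (omegaD X _ _).

Lemma Dn_omegaD n : forall A B (g : @hom X A B), Dn n (omega g) = omega (Dit n g).
Proof. induction n; intros; simpl; [reflexivity|]. apply (IHn _ _ (Dif g)). Qed.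

Lemma precomp_omegaD A' A B (k : @hom X A' A) (g : hom A B) :
  linear k -> precomp k (omega g) = omega (comp k g).
Proof.
  intros Hk. apply functional_extensionality_dep; intro n.
  symmetry. apply Dit_linear_comp, Hk.
Qed.

Lemma Tseq_omegaD A B (f : @hom X A B) : Tseq (omega f) = omega (tangent f).
Proof.
  apply functional_extensionality_dep; intro n. unfold Tseq, omegaD, tangent.
  rewrite Dit_pair, Dit_linear_comp by apply linear_pi0. reflexivity.
Qed.

Lemma Tn_omegaD n : forall A B (f : @hom X A B), Tn n (omega f) = omega (tangent_iter n f).
Proof. induction n; intros; simpl; [reflexivity|]. rewrite Tseq_omegaD. apply IHn. Qed.

Lemma omegaD_add A B (f g : @hom X A B) : omega (add f g) = seqadd (omega f) (omega g).
Proof. apply functional_extensionality_dep; intro n. apply Dit_add. Qed.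

Lemma omegaD_zero A B : omega (@zero X A B) = seqzero A B.
Proof. apply functional_extensionality_dep; intro n. apply Dit_zero. Qed.

Lemma omegaD_linear A B (k : @hom X A B) :
  linear k -> omega k = fun n => comp (ident n A) k.
Proof. intros Hk. apply functional_extensionality_dep; intro n. apply Dit_linear, Hk. Qed.

Lemma omegaD_is_Dseq A B (f : @hom X A B) : is_Dseq (omega f).
Proof.
  intros n. rewrite Dn_omegaD. generalize (Dit n f); clear f; intros h.
  change (Dseq (omega h)) with (omega (Dif h)).
  change (Dseq (omega (Dif h))) with (omega (Dif (Dif h))).
  split; [|split; [|split]].
  - rewrite precomp_omegaD, CD2_zero by (apply linear_pair; auto using linear_idm, linear_zero).
    apply omegaD_zero.
  - rewrite !precomp_omegaD, CD2_add
      by (apply linear_prodm; auto using linear_idm, linear_pi0, linear_pi1, linear_add).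
    apply omegaD_add.
  - rewrite precomp_omegaD, CD6 by apply linear_ell. reflexivity.
  - rewrite precomp_omegaD, CD7 by apply linear_cmap. reflexivity.
Qed.

Lemma omegaD_idm A : omega (idm A) = iseq A.
Proof.
  rewrite omegaD_linear by apply linear_idm.
  apply functional_extensionality_dep; intro n. apply comp_id_r.
Qed.

Lemma omegaD_comp A B C (f : @hom X A B) (g : hom B C) :
  omega (comp f g) = seqcomp (omega f) (omega g).
Proof.
  apply functional_extensionality_dep; intro n. unfold seqcomp.
  rewrite Tn_omegaD. apply Dit_comp.
Qed.

Lemma omegaD_pair C A B (f : @hom X C A) (g : hom C B) :
  omega (pair f g) = seqpair (omega f) (omega g).
Proof. apply functional_extensionality_dep; intro n. apply Dit_pair. Qed.

Lemma omegaD_bang A : omega (bang A) = seqbang A.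
Proof. apply functional_extensionality_dep; intro n. apply bang_uniq. Qed.

Lemma omegaD_delta A B (f : @hom X A B) : delta (omega f) = Dmap (omegaD X) (omega f).
Proof. apply functional_extensionality_dep; intro n. apply Dn_omegaD. Qed.

End OmegaD.

Theorem proposition4p17 (X : CDC) : is_D_coalgebra (omegaD X).
Proof.
  unfold is_D_coalgebra.
  repeat match goal with |- _ /\ _ => split end.
  - exact (@omegaD_is_Dseq X).
  - exact (@omegaD_idm X).
  - exact (@omegaD_comp X).
  - intros A B. apply omegaD_linear, linear_pi0.
  - intros A B. apply omegaD_linear, linear_pi1.
  - exact (@omegaD_pair X).
  - exact (@omegaD_bang X).
  - exact (@omegaD_add X).
  - exact (@omegaD_zero X).
  - intros A B f. reflexivity.
  - exact (@omegaD_delta X).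
Qed.
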